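(* Let $k=2m+1$, $l=2n+1$ be odd integers. Let $V(k,l)\subset\mathbb C^3(x,y,z)$ be the vanishing set of $S_n(t)S_{m-1}(z)-S_{n-1}(t)S_m(z)$ with $t=\left( xS_m(z)-yS_{m-1}(z) \right)\left( yS_m(z)-xS_{m-1}(z) \right)-z\left(S^2_m(z)+S^2_{m-1}(z)\right)+4S_m(z)S_{m-1}(z)$, and let $U(k,l)\subset\mathbb C^3(u,v,z)$ be the vanishing set of $S_n(t)S_{m-1}(z)-S_{n-1}(t)S_m(z)$ with $t=uv-z\big(S_m^2(z)+S_{m-1}^2(z)\big)+4S_m(z)S_{m-1}(z)$. Then $V(k,l)$ is birational to $U(k,l)$.
   Context: The Chebyshev polynomials $S_j(\omega)$ are defined for all integers $j$ by $S_0=1$, $S_1=\omega$, $S_{j+1}=\omega S_j-S_{j-1}$. (The correspondence is given by the substitution $u=xS_m(z)-yS_{m-1}(z)$, $v=yS_m(z)-xS_{m-1}(z)$.) *)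

From HB Require Import structures.
From mathcomp Require Import all_boot all_order all_algebra.
From mathcomp Require Import mpoly.
From mathcomp Require Import complex.
From mathcomp Require Import reals.

Set Implicit Arguments.
Unset Strict Implicit.
Unset Printing Implicit Defensive.

Import Order.TTheory GRing.Theory Num.Theory.
Local Open Scope ring_scope.

(* chebpair w n = (S_n(w), S_{n+1}(w)) *)
Fixpoint chebpair (A : pzRingType) (w : A) (n : nat) : A * A :=
  match n with
  | 0%N => (1, w)
  | n'.+1 => let (a, b) := chebpair w n' in (b, w * b - a)
  end.

Definition chebn (A : pzRingType) (n : nat) (w : A) : A := (chebpair w n).1.

(* S_{-1} = 0 and S_{-(n+2)} = - S_n, which is the unique extension to all
   integers of S_0 = 1, S_1 = w, S_{j+1} = w S_j - S_{j-1}. *)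
Definition cheb (A : pzRingType) (j : int) (w : A) : A :=
  match j with
  | Posz n => chebn n w
  | Negz 0 => 0
  | Negz n.+1 => - chebn n w
  end.

Definition pt (C : Type) := 'I_3 -> C.
Definition c0 : 'I_3 := @Ordinal 3 0 isT.
Definition c1 : 'I_3 := @Ordinal 3 1 isT.
Definition c2 : 'I_3 := @Ordinal 3 2 isT.

Definition Vset (C : fieldType) (m n : int) : pt C -> Prop :=
  fun p =>
    let x := p c0 in let y := p c1 in let z := p c2 in
    let Sm := cheb m z in let Sm1 := cheb (m - 1) z in
    let t := (x * Sm - y * Sm1) * (y * Sm - x * Sm1)
             - z * (Sm ^+ 2 + Sm1 ^+ 2) + 4%:R * Sm * Sm1 in
    cheb n t * Sm1 - cheb (n - 1) t * Sm = 0.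

Definition Uset (C : fieldType) (m n : int) : pt C -> Prop :=
  fun p =>
    let u := p c0 in let v := p c1 in let z := p c2 in
    let Sm := cheb m z in let Sm1 := cheb (m - 1) z in
    let t := u * v - z * (Sm ^+ 2 + Sm1 ^+ 2) + 4%:R * Sm * Sm1 in
    cheb n t * Sm1 - cheb (n - 1) t * Sm = 0.

Definition zariski_closed (C : fieldType) (Z : pt C -> Prop) : Prop :=
  exists P : {mpoly C[3]} -> Prop,
    forall x : pt C, Z x <-> (forall q, P q -> q.@[x] = 0).

Definition open_in (C : fieldType) (A0 X : pt C -> Prop) : Prop :=
  exists Z, zariski_closed Z /\ forall x, A0 x <-> (X x /\ ~ Z x).

Definition dense_in (C : fieldType) (A0 X : pt C -> Prop) : Prop :=
  (forall x, A0 x -> X x) /\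
  forall Z, zariski_closed Z -> (forall x, A0 x -> Z x) -> forall x, X x -> Z x.

Definition regular_on (C : fieldType) (W : pt C -> Prop) (f : pt C -> pt C) :=
  forall w, W w ->
    exists (p : 'I_3 -> {mpoly C[3]}) (q : {mpoly C[3]}),
      q.@[w] != 0 /\
      forall w', W w' -> q.@[w'] != 0 ->
        forall i, f w' i = (p i).@[w'] / q.@[w'].

Definition birational (C : fieldType) (X Y : pt C -> Prop) : Prop :=
  exists (X0 Y0 : pt C -> Prop) (f g : pt C -> pt C),
    open_in X0 X /\ dense_in X0 X /\ open_in Y0 Y /\ dense_in Y0 Y /\
    regular_on X0 f /\ regular_on Y0 g /\
    (forall x, X0 x -> Y0 (f x)) /\
    (forall y, Y0 y -> X0 (g y)) /\
    (forall x, X0 x -> g (f x) = x) /\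
    (forall y, Y0 y -> f (g y) = y).

(* Over a fixed z, the substitution u = x S_m(z) - y S_{m-1}(z), v = y S_m(z) - x S_{m-1}(z)
   is linear in (x, y) with determinant D(z) = S_m(z)^2 - S_{m-1}(z)^2, and V is exactly the
   preimage of U.  Hence it identifies the parts of V and U where D does not vanish, the
   inverse dividing by D.  These parts are open, and D is a nonzero polynomial because
   D(2) = (m+1)^2 - m^2 = k is odd.
   They are also dense, which is shown in the Euclidean topology, where Zariski-closed sets
   are closed.  At a point where D(z0) = 0, S_m(z0) and S_{m-1}(z0) are both nonzero since
   they have no common zero.  Along the line (x0 + s, y0, z) in V, resp. (u0 + s, v0 + s, z)
   in U, the equation is then a polynomial in s of fixed degree whose leading coefficient
   stays away from 0 for z near z0, while its constant term tends to 0; so it has a root s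
   close to 0, and z can be chosen with D(z) <> 0. *)

From HB Require Import structures.
From mathcomp Require Import all_boot all_order all_algebra.
From mathcomp Require Import mpoly.
From mathcomp Require Import complex.
From mathcomp Require Import reals.
From mathcomp Require Import ring zify.
From Stdlib Require Import FunctionalExtensionality.
Set Implicit Arguments.
Unset Strict Implicit.
Unset Printing Implicit Defensive.

Import Order.TTheory GRing.Theory Num.Theory.
Local Open Scope ring_scope.

Section Chebyshev.
Variable A : pzRingType.
Implicit Types w : A.

Lemma chebn0 w : chebn 0 w = 1. Proof. by []. Qed.
Lemma chebn1 w : chebn 1 w = w. Proof. by []. Qed.

Lemma chebnSS w n : chebn n.+2 w = w * chebn n.+1 w - chebn n w.
Proof. by rewrite /chebn /=; case: (chebpair w n). Qed.

Lemma chebn_ind (P : nat -> Prop) :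
  P 0%N -> P 1%N -> (forall n, P n -> P n.+1 -> P n.+2) -> forall n, P n.
Proof.
move=> P0 P1 PSS n; suff : P n /\ P n.+1 by case.
by elim: n => [|n [Pn Pn1]]; split=> //; apply: PSS.
Qed.

Lemma cheb_pos_pred n w : cheb (n.+1%:Z - 1) w = chebn n w.
Proof. by rewrite -addn1 PoszD addrK. Qed.

Lemma cheb_neg_pred n w : cheb (Negz n - 1) w = - chebn n w.
Proof. by rewrite (_ : Negz n - 1 = Negz n.+1) // !NegzE; ring. Qed.

Lemma cheb_two j : cheb j (2%:R : A) = (j + 1)%:~R.
Proof.
have chebn_two n : chebn n (2%:R : A) = n.+1%:R.
  elim/chebn_ind: n => // n IH IH1.
  by rewrite chebnSS IH IH1 -natrM -natrB; [congr _%:R|]; lia.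
case: j => [n|[|n]] //=; first by rewrite chebn_two -PoszD addn1.
by rewrite chebn_two NegzE (_ : _ + 1 = - n.+1%:Z) ?mulrNz //; lia.
Qed.

End Chebyshev.

Lemma rmorph_cheb (A B : pzRingType) (f : {rmorphism A -> B}) (w : A) j :
  f (cheb j w) = cheb j (f w).
Proof.
have rmorph_chebn n : f (chebn n w) = chebn n (f w).
  by elim/chebn_ind: n => [||n IH IH1]; rewrite ?rmorph1 // !chebnSS rmorphB rmorphM IH IH1.
by case: j => [n|[|n]] /=; rewrite ?rmorph0 ?rmorphN ?rmorph_chebn.
Qed.

Lemma cheb_no_common_root (A : nzRingType) (w : A) (m : int) :
  cheb m w = 0 -> cheb (m - 1) w = 0 -> False.
Proof.
have chebn_no_common_root n : chebn n w = 0 -> chebn n.+1 w = 0 -> False.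
  elim: n => [|n IH]; first by move=> /eqP; rewrite oner_eq0.
  move=> h1; rewrite chebnSS h1 mulr0 sub0r => /eqP; rewrite oppr_eq0 => /eqP h0.
  exact: IH h0 h1.
case: m => [[|n]|n].
- by move=> /eqP; rewrite oner_eq0.
- by rewrite cheb_pos_pred => h1 h0; apply: (chebn_no_common_root n).
- rewrite cheb_neg_pred; case: n => [|n] /=; first by move=> _ /eqP; rewrite oppr_eq0 oner_eq0.
  by move=> /eqP + /eqP; rewrite !oppr_eq0 => /eqP h1 /eqP h0; apply: (chebn_no_common_root n).
Qed.

Definition mk3 (T : Type) (a b c : T) : 'I_3 -> T :=
  fun i => if val i == 0%N then a else if val i == 1%N then b else c.

Lemma ord3_cases (P : 'I_3 -> Prop) : P c0 -> P c1 -> P c2 -> forall i, P i.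
Proof.
move=> h0 h1 h2 [[|[|[|k]]] hk] //.
- by rewrite (_ : Ordinal hk = c0) //; apply: val_inj.
- by rewrite (_ : Ordinal hk = c1) //; apply: val_inj.
- by rewrite (_ : Ordinal hk = c2) //; apply: val_inj.
Qed.

Lemma mk3_c0 (T : Type) (a b c : T) : mk3 a b c c0 = a. Proof. by []. Qed.
Lemma mk3_c1 (T : Type) (a b c : T) : mk3 a b c c1 = b. Proof. by []. Qed.
Lemma mk3_c2 (T : Type) (a b c : T) : mk3 a b c c2 = c. Proof. by []. Qed.

Lemma mk3E (T : Type) (p : 'I_3 -> T) : mk3 (p c0) (p c1) (p c2) = p.
Proof. by apply: functional_extensionality; apply: ord3_cases. Qed.

Section Continuity.
Variable C : numFieldType.
Implicit Types (p w : pt C) (f g : pt C -> C).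

(* Radii are capped at 1 so that a product of such functions is again one. *)
Definition lipschitz_at p f := exists K : C, 0 <= K /\
  forall (r : C) w, 0 <= r -> r <= 1 -> (forall i, `|w i - p i| <= r) ->
    `|f w - f p| <= K * r.

Lemma eq_lipschitz_at p f g : f =1 g -> lipschitz_at p f -> lipschitz_at p g.
Proof. by move=> e [K [K0 h]]; exists K; split=> // r w *; rewrite -!e; apply: h. Qed.

Lemma lipschitz_at_cst p c : lipschitz_at p (fun=> c).
Proof. by exists 0; split=> // r w _ _ _; rewrite subrr normr0 mul0r. Qed.

Lemma lipschitz_at_coord p i : lipschitz_at p (fun w => w i).
Proof. by exists 1; split=> // r w _ _ h; rewrite mul1r. Qed.

Lemma lipschitz_atD p f g :
  lipschitz_at p f -> lipschitz_at p g -> lipschitz_at p (fun w => f w + g w).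
Proof.
move=> [K1 [K1p h1]] [K2 [K2p h2]]; exists (K1 + K2); split; first exact: addr_ge0.
move=> r w r0 r1 hw; rewrite opprD addrACA mulrDl.
by apply: le_trans (ler_normD _ _) _; apply: lerD; auto.
Qed.

Lemma lipschitz_atM p f g :
  lipschitz_at p f -> lipschitz_at p g -> lipschitz_at p (fun w => f w * g w).
Proof.
move=> [K1 [K1p h1]] [K2 [K2p h2]].
exists ((`|f p| + K1) * K2 + K1 * `|g p|); split.
  by rewrite addr_ge0 ?mulr_ge0 ?addr_ge0.
move=> r w r0 r1 hw.
have -> : f w * g w - f p * g p = f w * (g w - g p) + (f w - f p) * g p by ring.
apply: le_trans (ler_normD _ _) _; rewrite [X in _ <= X]mulrDl.
apply: lerD; rewrite normrM; last by rewrite mulrAC ler_pM // h1.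
have fw_bound : `|f w| <= `|f p| + K1.
  rewrite -[f w](subrK (f p)) addrC; apply: le_trans (ler_normD _ _) _.
  rewrite lerD2l; apply: le_trans (h1 r w r0 r1 hw) _.
  by rewrite -{2}[K1]mulr1 ler_wpM2l.
by rewrite -mulrA ler_pM // h2.
Qed.

Lemma lipschitz_at_big p (op : C -> C -> C) (x : C) (I : Type) (s : seq I)
    (F : I -> pt C -> C) :
  (forall f g, lipschitz_at p f -> lipschitz_at p g ->
     lipschitz_at p (fun w => op (f w) (g w))) ->
  (forall i, lipschitz_at p (F i)) -> lipschitz_at p (fun w => \big[op/x]_(i <- s) F i w).
Proof.
move=> op_lip F_lip; elim: s => [|a s IH].
  by apply: (eq_lipschitz_at _ (lipschitz_at_cst p x)) => w; rewrite big_nil.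
by apply: (eq_lipschitz_at _ (op_lip _ _ (F_lip a) IH)) => w; rewrite big_cons.
Qed.

Lemma lipschitz_at_meval p (q : {mpoly C[3]}) : lipschitz_at p (fun w => q.@[w]).
Proof.
apply: (@eq_lipschitz_at _ (fun w => \sum_(m <- msupp q) q@_m * \prod_i w i ^+ m i)).
  by move=> w; rewrite -mevalE.
apply: lipschitz_at_big => [f g|m]; first exact: lipschitz_atD.
apply: lipschitz_atM; first exact: lipschitz_at_cst.
apply: lipschitz_at_big => [f g|i]; first exact: lipschitz_atM.
apply: (@eq_lipschitz_at _ (fun w => \prod_(k < m i) w i)).
  by move=> w; rewrite prodr_const card_ord.
by apply: lipschitz_at_big => [f g|_]; [exact: lipschitz_atM | exact: lipschitz_at_coord].
Qed.

Lemma lipschitz_at_continuous p f : lipschitz_at p f -> forall e : C, 0 < e ->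
  exists2 r : C, 0 < r & forall w, (forall i, `|w i - p i| < r) -> `|f w - f p| < e.
Proof.
move=> [K [K0 h]] e e0.
have K1 : 0 < K + 1 + e by rewrite -addrA ltr_wpDl // addr_gt0.
exists (e / (K + 1 + e)); first by rewrite divr_gt0.
move=> w hw.
have r1 : e / (K + 1 + e) <= 1 by rewrite ler_pdivrMr // mul1r ler_wpDl // addr_ge0.
apply: le_lt_trans (h _ w (ltW (divr_gt0 e0 K1)) r1 (fun i => ltW (hw i))) _.
by rewrite mulrA ltr_pdivrMr // mulrC ltr_pM2l // -addrA ltrDl addr_gt0.
Qed.

Lemma meval_continuous p (q : {mpoly C[3]}) e : 0 < e ->
  exists2 r : C, 0 < r & forall w, (forall i, `|w i - p i| < r) -> `|q.@[w] - q.@[p]| < e.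
Proof. exact: lipschitz_at_continuous (lipschitz_at_meval p q) e. Qed.

End Continuity.

Lemma open_in_nonvanishing (C : fieldType) (S : pt C -> Prop) (q : {mpoly C[3]}) :
  open_in (fun x => S x /\ q.@[x] != 0) S.
Proof.
exists (fun x => q.@[x] = 0); split.
  by exists (eq^~ q) => x; split=> [qx _ -> //|]; apply.
by move=> x; split=> -[Sx /eqP qx].
Qed.

Lemma dense_in_nonvanishing (C : numFieldType) (S : pt C -> Prop) (q : {mpoly C[3]}) :
  (forall p, S p -> q.@[p] = 0 -> forall d, 0 < d ->
     exists w, [/\ S w, q.@[w] != 0 & forall i, `|w i - p i| < d]) ->
  dense_in (fun x => S x /\ q.@[x] != 0) S.
Proof.
move=> approx; split=> [x []//|Z [P hP] SqZ x Sx]; apply/hP => r Pr.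
have SqP w : S w -> q.@[w] != 0 -> r.@[w] = 0.
  by move=> Sw qw; apply: (iffLR (hP w)) => //; apply: SqZ.
have [qx|qx] := eqVneq q.@[x] 0; last exact: SqP.
apply/eqP; apply: contraT; rewrite -normr_gt0 => rx.
have [d d0 near_r] := meval_continuous x r rx.
have [w [Sw qw near_w]] := approx x Sx qx d d0.
by have := near_r w near_w; rewrite SqP // sub0r normrN ltxx.
Qed.

Lemma regular_on_frac (C : fieldType) (W : pt C -> Prop) (f : pt C -> pt C)
    (P : 'I_3 -> {mpoly C[3]}) (Q : {mpoly C[3]}) :
  (forall w, W w -> Q.@[w] != 0) ->
  (forall w i, W w -> f w i = (P i).@[w] / Q.@[w]) -> regular_on W f.
Proof. by move=> Q0 fE w Ww; exists P, Q; split=> [|w' Ww' _ i]; [apply: Q0 | apply: fE]. Qed.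

Section Approximation.
Variable C : numClosedFieldType.

Lemma prod_XsubC_near_root (x0 : C) (rs : seq C) : rs != [::] ->
  exists2 r, r \in rs & `|x0 - r| ^+ size rs <= `|(\prod_(z <- rs) ('X - z%:P)).[x0]|.
Proof.
elim: rs => [//|a rs IH] _.
rewrite big_cons hornerM hornerXsubC normrM /=.
case: rs IH => [|b rs] IH.
  by exists a; rewrite ?mem_seq1 // big_nil hornerC normr1 mulr1 expr1.
have [//|r rin hr] := IH.
have [ar|ra] := orP (ger_leVge (normr_ge0 (x0 - a)) (normr_ge0 (x0 - r))).
- exists a; first exact: mem_head.
  rewrite exprS ler_pM ?exprn_ge0 //; apply: le_trans hr.
  by rewrite lerXn2r ?nnegrE.
- exists r; first by rewrite in_cons rin orbT.
  by rewrite exprS ler_pM ?exprn_ge0.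
Qed.

Lemma exists_root_near (P : {poly C}) (N : nat) (x0 : C) : size P = N.+2 ->
  exists2 r, root P r & `|x0 - r| ^+ N.+1 <= `|P.[x0]| / `|lead_coef P|.
Proof.
move=> sizeP.
have lP0 : lead_coef P != 0 by rewrite lead_coef_eq0 -size_poly_eq0 sizeP.
have [rs Prs] := closed_field_poly_normal P.
have size_rs : size rs = N.+1.
  by move: sizeP; rewrite Prs size_scale // size_prod_XsubC => -[].
have [|r rin hr] := @prod_XsubC_near_root x0 rs; first by rewrite -size_eq0 size_rs.
exists r; first by rewrite Prs rootZ // root_prod_XsubC.
by rewrite {1}Prs hornerZ normrM mulrC mulKf ?normr_eq0 // -size_rs.
Qed.

Lemma exists_nonroot_near (D : {poly C}) (z0 d : C) : D != 0 -> 0 < d ->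
  exists2 z, `|z - z0| < d & D.[z] != 0.
Proof.
move=> D0 d0.
pose zs := [seq z0 + d / (k.+2)%:R | k <- iota 0 (size D)].
have : ~~ all (root D) zs.
  apply/negP => all_roots.
  have zs_uniq : uniq zs.
    rewrite map_inj_uniq ?iota_uniq // => i j /addrI /mulfI.
    by move=> /(_ (lt0r_neq0 d0)) /invr_inj /eqP; rewrite eqr_nat => /eqP [].
  by have := max_poly_roots D0 all_roots zs_uniq; rewrite size_map size_iota ltnn.
case/allPn => _ /mapP [k _ ->] Dk; exists (z0 + d / (k.+2)%:R) => //.
rewrite addrAC subrr add0r normrM ger0_norm ?ltW // normfV ger0_norm ?ler0n //.
by rewrite ltr_pdivrMr ?ltr0n // ltr_pMr // ltr1n.
Qed.

Lemma exists_pos_le (a b : C) : 0 < a -> 0 < b -> exists c, [/\ 0 < c, c <= a & c <= b].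
Proof.
move=> a0 b0; have ab0 : 0 < a + b by rewrite addr_gt0.
exists (a * b / (a + b)); split; first by rewrite divr_gt0 ?mulr_gt0.
- by rewrite -mulrA ger_pMr // ler_pdivrMr // mul1r lerDr ltW.
- by rewrite mulrAC ger_pMl // ler_pdivrMr // mul1r lerDl ltW.
Qed.

Lemma normr_mk3_subz (x y z z' : C) i : `|mk3 x y z i - mk3 x y z' i| <= `|z - z'|.
Proof. by move: i; apply: ord3_cases; rewrite !(mk3_c0, mk3_c1, mk3_c2) ?subrr ?normr0. Qed.

(* A root [s] of [P z] has [|s|^(N+1) <= |F (x0, y0, z)| / |L (x0, y0, z)|], which is
   small for [z] near [z0]; [z] is then picked off the finitely many roots of [D]. *)
Lemma approx_zero_along_line (F L : {mpoly C[3]}) (D : {poly C}) (e x0 y0 z0 : C)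
    (N : nat) (P : C -> {poly C}) :
  D != 0 -> `|e| <= 1 ->
  (forall z s, (P z).[s] = F.@[mk3 (s + x0) (e * s + y0) z]) ->
  (forall z, L.@[mk3 x0 y0 z] != 0 ->
     size (P z) = N.+2 /\ lead_coef (P z) = L.@[mk3 x0 y0 z]) ->
  F.@[mk3 x0 y0 z0] = 0 -> L.@[mk3 x0 y0 z0] != 0 ->
  forall d, 0 < d -> exists w,
    [/\ F.@[w] = 0, D.[w c2] != 0 & forall i, `|w i - mk3 x0 y0 z0 i| < d].
Proof.
move=> D0 e1 PF sizeP F0 L0 d d0.
set p0 := mk3 x0 y0 z0; set l := `|L.@[p0]|.
have l2 : 0 < l / 2%:R by rewrite divr_gt0 ?normr_gt0.
have dN : 0 < d ^+ N.+1 by exact: exprn_gt0.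
have [rL rL0 near_L] := meval_continuous p0 L l2.
have [rF rF0 near_F] := meval_continuous p0 F (mulr_gt0 l2 dN).
have [r [r0 rrL rrF]] := exists_pos_le rL0 rF0.
have [rho [rho0 rho_r rho_d]] := exists_pos_le r0 d0.
have [z zz0 Dz] := exists_nonroot_near z0 D0 rho0.
set pz := mk3 x0 y0 z.
have pz_near r' : rho <= r' -> forall i, `|pz i - p0 i| < r'.
  by move=> rho_r' i; rewrite (le_lt_trans (normr_mk3_subz _ _ _ _ _)) ?(lt_le_trans zz0).
have Lz : l / 2%:R < `|L.@[pz]|.
  have := near_L pz (pz_near _ (le_trans rho_r rrL)).
  rewrite distrC => /(le_lt_trans (lerB_dist _ _)).
  by rewrite -/l ltrBlDr {1}(splitr l) ltrD2l.
have [sizePz leadPz] : size (P z) = N.+2 /\ lead_coef (P z) = L.@[pz].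
  by apply: sizeP; rewrite -normr_gt0 (lt_trans l2 Lz).
have [s /rootP Pzs hs] := exists_root_near 0 sizePz.
have s_d : `|s| < d.
  rewrite -(ltr_pXn2r (ltn0Sn N)) ?nnegrE ?normr_ge0 ?ltW //.
  move: hs; rewrite sub0r normrN => /le_lt_trans; apply.
  rewrite PF mulr0 !add0r leadPz ltr_pdivrMr ?(lt_trans l2) //.
  have := near_F pz (pz_near _ (le_trans rho_r rrF)); rewrite F0 subr0.
  by move=> /lt_le_trans -> //; rewrite mulrC ler_wpM2l ?ltW.
exists (mk3 (s + x0) (e * s + y0) z); split => //; first by rewrite -(PF z s).
apply: ord3_cases; rewrite !(mk3_c0, mk3_c1, mk3_c2) ?addrK //; last exact: lt_le_trans zz0 rho_d.
by rewrite normrM (le_lt_trans _ s_d) // ler_piMl.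
Qed.

End Approximation.

Section QuadraticPolynomials.
Variable C : idomainType.
Implicit Types T : {poly C}.

Lemma size_lead_chebn T k : size T = 3 ->
  size (chebn k T) = (2 * k).+1 /\ lead_coef (chebn k T) = lead_coef T ^+ k.
Proof.
move=> sizeT; elim/chebn_ind: k => [|| k [s1 l1] [s2 l2]].
- by rewrite chebn0 size_poly1 lead_coef1.
- by rewrite chebn1 sizeT expr1.
have TS : size (T * chebn k.+1 T) = (2 * k.+2).+1.
  by rewrite size_mul -?size_poly_eq0 ?sizeT ?s2 //; lia.
have Sk : (size (- chebn k T)%R < size (T * chebn k.+1 T)%R)%N by rewrite size_polyN s1 TS; lia.
by rewrite chebnSS size_polyDl // lead_coefDl // TS lead_coefM l2 -exprS.
Qed.

Lemma size_lead_chebn_diff T (a b : C) j : size T = 3 -> a != 0 ->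
  size (chebn j.+1 T * a%:P - chebn j T * b%:P) = (2 * j + 1).+2 /\
  lead_coef (chebn j.+1 T * a%:P - chebn j T * b%:P) = a * lead_coef T ^+ j.+1.
Proof.
move=> sizeT a0.
have [s1 l1] := size_lead_chebn j sizeT; have [s2 l2] := size_lead_chebn j.+1 sizeT.
have S1 : size (chebn j.+1 T * a%:P) = (2 * j + 1).+2.
  by rewrite mulrC mul_polyC size_scale // s2; lia.
have S0 : (size (- (chebn j T * b%:P))%R < (2 * j + 1).+2)%N.
  rewrite size_polyN mulrC mul_polyC (leq_ltn_trans (size_scale_leq _ _)) // s1; lia.
by rewrite size_polyDl S1 // lead_coefDl ?S1 // mulrC mul_polyC lead_coefZ l2.
Qed.

Lemma size_lead_linear (a b : C) : a != 0 ->
  size (a%:P * 'X + b%:P) = 2 /\ lead_coef (a%:P * 'X + b%:P) = a.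
Proof.
move=> a0; have aX : size (a%:P * 'X) = 2 by rewrite size_mulX ?polyC_eq0 // size_polyC a0.
have bC : (size b%:P < size (a%:P * 'X)%R)%N by rewrite aX (leq_ltn_trans (size_polyC_leq1 _)).
by rewrite size_polyDl // lead_coefDl // lead_coefMX lead_coefC aX.
Qed.

Lemma size_lead_linear_prod (a b c d e : C) : a != 0 -> c != 0 ->
  let T := (a%:P * 'X + b%:P) * (c%:P * 'X + d%:P) + e%:P in
  size T = 3 /\ lead_coef T = a * c.
Proof.
move=> a0 c0 T; have [s1 l1] := size_lead_linear b a0; have [s2 l2] := size_lead_linear d c0.
have S : size ((a%:P * 'X + b%:P) * (c%:P * 'X + d%:P)) = 3.
  by rewrite size_mul -?size_poly_eq0 ?s1 ?s2.
have eC : (size e%:P < 3)%N by rewrite (leq_ltn_trans (size_polyC_leq1 _)).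
by rewrite /T size_polyDl ?S // lead_coefDl ?S // lead_coefM l1 l2.
Qed.

End QuadraticPolynomials.

Section Surfaces.
Variables m n : int.

Section Equations.
Variable A : comNzRingType.
Implicit Types x y z u v t a b : A.

Definition tU u v z : A :=
  u * v - z * (cheb m z ^+ 2 + cheb (m - 1) z ^+ 2) + 4%:R * cheb m z * cheb (m - 1) z.
Definition uV x y z : A := x * cheb m z - y * cheb (m - 1) z.
Definition vV x y z : A := y * cheb m z - x * cheb (m - 1) z.
Definition chebeq t a b : A := cheb n t * a - cheb (n - 1) t * b.
Definition Ueq u v z : A := chebeq (tU u v z) (cheb (m - 1) z) (cheb m z).
Definition Veq x y z : A := Ueq (uV x y z) (vV x y z) z.
Definition detm z : A := cheb m z ^+ 2 - cheb (m - 1) z ^+ 2.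
(* The coefficient [a] or [b] of [chebeq t a b] that multiplies its leading term in [t]. *)
Definition lead_chebeq a b : A := if n is Posz _ then a else b.

End Equations.

Section Morphisms.
Variables (A B : comNzRingType) (f : {rmorphism A -> B}).

Lemma rmorph_tU u v z : f (tU u v z) = tU (f u) (f v) (f z).
Proof. by rewrite /tU !(rmorph_nat, rmorphN, rmorphD, rmorphB, rmorphM, rmorphXn, rmorph_cheb). Qed.

Lemma rmorph_Ueq u v z : f (Ueq u v z) = Ueq (f u) (f v) (f z).
Proof. by rewrite /Ueq /chebeq !(rmorphB, rmorphM, rmorph_cheb) rmorph_tU. Qed.

Lemma rmorph_uV x y z : f (uV x y z) = uV (f x) (f y) (f z).
Proof. by rewrite /uV !(rmorphB, rmorphM, rmorph_cheb). Qed.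

Lemma rmorph_vV x y z : f (vV x y z) = vV (f x) (f y) (f z).
Proof. by rewrite /vV !(rmorphB, rmorphM, rmorph_cheb). Qed.

Lemma rmorph_Veq x y z : f (Veq x y z) = Veq (f x) (f y) (f z).
Proof. by rewrite /Veq rmorph_Ueq rmorph_uV rmorph_vV. Qed.

Lemma rmorph_detm z : f (detm z) = detm (f z).
Proof. by rewrite /detm !(rmorphB, rmorphXn, rmorph_cheb). Qed.

Lemma rmorph_lead_chebeq a b : f (lead_chebeq a b) = lead_chebeq (f a) (f b).
Proof. by rewrite /lead_chebeq; case: n. Qed.

End Morphisms.

Lemma horner_detm (A : comNzRingType) (z : A) : (detm 'X).[z] = detm z.
Proof. by rewrite -horner_evalE rmorph_detm /= horner_evalE hornerX. Qed.

Lemma detm_X_neq0 (C : numDomainType) : detm ('X : {poly C}) != 0.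
Proof.
apply: contraTneq isT => /(congr1 (horner^~ 2%:R)); rewrite horner_detm horner0.
rewrite /detm !cheb_two -!rmorphXn -rmorphB /= => /eqP; rewrite intr_eq0.
by rewrite (_ : _ - _ = 2 * m + 1); [lia | ring].
Qed.

Lemma detm_eq0_cheb_neq0 (C : idomainType) (z : C) :
  detm z = 0 -> cheb (m - 1) z != 0 /\ cheb m z != 0.
Proof.
move=> /eqP; rewrite subr_eq0 eqf_sqr => /orP D0.
have [b0|b0] := eqVneq (cheb (m - 1) z) 0.
  by exfalso; case: D0; rewrite b0 ?oppr0 => /eqP a0; apply: (cheb_no_common_root a0 b0).
by split=> //; case: D0 => /eqP ->; rewrite ?oppr_eq0.
Qed.

Lemma chebeq_root_cases (A : comNzRingType) (t a b : A) : a != 0 -> b != 0 ->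
  chebeq t a b = 0 -> exists j, n = j.+1 \/ n = Negz j.+1.
Proof.
rewrite /chebeq; case: n => [[|j]|[|j]] a0 b0 /eqP eq0.
- by move: eq0; rewrite /= chebn0 mul0r mul1r subr0 (negPf a0).
- by exists j; left.
- by move: eq0; rewrite cheb_neg_pred /= chebn0 mul0r mulN1r opprK add0r (negPf b0).
- by exists j; right.
Qed.

Lemma size_lead_chebeq (C : idomainType) (T : {poly C}) (a b : C) j :
  size T = 3 -> (n = j.+1 \/ n = Negz j.+1) -> lead_chebeq a b != 0 ->
  size (chebeq T a%:P b%:P) = (2 * j + 1).+2 /\
  lead_coef (chebeq T a%:P b%:P) = lead_chebeq a b * lead_coef T ^+ j.+1.
Proof.
rewrite /chebeq /lead_chebeq => sizeT [|] ->.
  by rewrite cheb_pos_pred; apply: size_lead_chebn_diff.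
rewrite cheb_neg_pred /= => b0.
rewrite (_ : _ - _ = chebn j.+1 T * b%:P - chebn j T * a%:P); last by ring.
exact: size_lead_chebn_diff.
Qed.

Lemma Ueq_polyC (A : comNzRingType) (u v : {poly A}) (z : A) :
  Ueq u v z%:P = chebeq (u * v + (tU 0 0 z)%:P) (cheb (m - 1) z)%:P (cheb m z)%:P.
Proof. by rewrite rmorph_tU !rmorph0 !(rmorph_cheb polyC) /Ueq /tU mul0r add0r addrA. Qed.

Lemma uV_line (A : comNzRingType) (x0 y0 z : A) :
  uV ('X + x0%:P) y0%:P z%:P = (cheb m z)%:P * 'X + (uV x0 y0 z)%:P.
Proof. by rewrite /uV -!(rmorph_cheb polyC) !(rmorphB, rmorphM) /=; ring. Qed.

Lemma vV_line (A : comNzRingType) (x0 y0 z : A) :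
  vV ('X + x0%:P) y0%:P z%:P = (- cheb (m - 1) z)%:P * 'X + (vV x0 y0 z)%:P.
Proof. by rewrite /vV -!(rmorph_cheb polyC) !(rmorphN, rmorphB, rmorphM) /=; ring. Qed.

Section Evaluation.
Variable A : comNzRingType.
Implicit Types (w : pt A) (a b s : A).

Lemma meval_Ueq w : (Ueq 'X_c0 'X_c1 'X_c2 : {mpoly A[3]}).@[w] = Ueq (w c0) (w c1) (w c2).
Proof. by rewrite rmorph_Ueq /= !mevalXU. Qed.

Lemma meval_uV w : (uV 'X_c0 'X_c1 'X_c2 : {mpoly A[3]}).@[w] = uV (w c0) (w c1) (w c2).
Proof. by rewrite rmorph_uV /= !mevalXU. Qed.

Lemma meval_vV w : (vV 'X_c0 'X_c1 'X_c2 : {mpoly A[3]}).@[w] = vV (w c0) (w c1) (w c2).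
Proof. by rewrite rmorph_vV /= !mevalXU. Qed.

Lemma meval_Veq w : (Veq 'X_c0 'X_c1 'X_c2 : {mpoly A[3]}).@[w] = Veq (w c0) (w c1) (w c2).
Proof. by rewrite rmorph_Veq /= !mevalXU. Qed.

Lemma meval_cheb j w : (cheb j 'X_c2 : {mpoly A[3]}).@[w] = cheb j (w c2).
Proof. by rewrite rmorph_cheb /= mevalXU. Qed.

Lemma meval_detm w : (detm 'X_c2 : {mpoly A[3]}).@[w] = detm (w c2).
Proof. by rewrite rmorph_detm /= mevalXU. Qed.

Lemma horner_chebeq (T : {poly A}) a b s :
  (chebeq T a%:P b%:P).[s] = chebeq T.[s] a b.
Proof.
by rewrite -horner_evalE /chebeq !(rmorphB, rmorphM, rmorph_cheb) /= !horner_evalE !hornerC.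
Qed.

End Evaluation.

Section ClosedField.
Variable C : numClosedFieldType.
Implicit Types (p w : pt C) (x y z : C).

Lemma approx_chebeq_along_line (F lam : {mpoly C[3]}) (e x0 y0 z0 : C) (T : C -> {poly C}) :
  `|e| <= 1 ->
  (forall z s, (chebeq (T z) (cheb (m - 1) z)%:P (cheb m z)%:P).[s] =
               F.@[mk3 (s + x0) (e * s + y0) z]) ->
  (forall z, lam.@[mk3 x0 y0 z] != 0 ->
     size (T z) = 3 /\ lead_coef (T z) = lam.@[mk3 x0 y0 z]) ->
  F.@[mk3 x0 y0 z0] = 0 -> detm z0 = 0 -> lam.@[mk3 x0 y0 z0] != 0 ->
  forall d, 0 < d -> exists w,
    [/\ F.@[w] = 0, (detm 'X_c2).@[w] != 0 & forall i, `|w i - mk3 x0 y0 z0 i| < d].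
Proof.
move=> e1 PF sizeT F0 D0 lam0 d d0.
have [b0 a0] := detm_eq0_cheb_neq0 D0.
have [j hj] : exists j, n = j.+1 \/ n = Negz j.+1.
  by apply: (chebeq_root_cases (t := (T z0).[0]) b0 a0); rewrite -horner_chebeq PF mulr0 !add0r.
pose L : {mpoly C[3]} := lead_chebeq (cheb (m - 1) 'X_c2) (cheb m 'X_c2) * lam ^+ j.+1.
have LE z : L.@[mk3 x0 y0 z] = lead_chebeq (cheb (m - 1) z) (cheb m z) * lam.@[mk3 x0 y0 z] ^+ j.+1.
  by rewrite rmorphM rmorphXn rmorph_lead_chebeq /= !meval_cheb.
have sizeP z : L.@[mk3 x0 y0 z] != 0 ->
    size (chebeq (T z) (cheb (m - 1) z)%:P (cheb m z)%:P) = (2 * j + 1).+2 /\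
    lead_coef (chebeq (T z) (cheb (m - 1) z)%:P (cheb m z)%:P) = L.@[mk3 x0 y0 z].
  rewrite LE mulf_eq0 negb_or expf_eq0 /= => /andP [lc0 /sizeT [sT lT]].
  by have [-> ->] := size_lead_chebeq sT hj lc0; rewrite lT.
have L0 : L.@[mk3 x0 y0 z0] != 0.
  by rewrite LE mulf_neq0 ?expf_neq0 // /lead_chebeq; case: hj => ->.
have [w [Fw Dw near_w]] := approx_zero_along_line (detm_X_neq0 C) e1 PF sizeP F0 L0 d0.
by exists w; split; rewrite // meval_detm -horner_detm.
Qed.

Lemma Uset_approx p : Uset m n p -> (detm 'X_c2).@[p] = 0 -> forall d, 0 < d ->
  exists w, [/\ Uset m n w, (detm 'X_c2).@[w] != 0 & forall i, `|w i - p i| < d].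
Proof.
rewrite meval_detm => Up D0 d d0.
pose T z := (1%:P * 'X + (p c0)%:P) * (1%:P * 'X + (p c1)%:P) + (tU 0 0 z)%:P.
have PF z s : (chebeq (T z) (cheb (m - 1) z)%:P (cheb m z)%:P).[s] =
              (Ueq 'X_c0 'X_c1 'X_c2).@[mk3 (s + p c0) (1 * s + p c1) z].
  rewrite meval_Ueq /= mul1r /T polyC1 !mul1r -Ueq_polyC.
  by rewrite -horner_evalE rmorph_Ueq /= !horner_evalE !(hornerD, hornerX, hornerC).
have sizeT z : (1 : {mpoly C[3]}).@[mk3 (p c0) (p c1) z] != 0 ->
    size (T z) = 3 /\ lead_coef (T z) = (1 : {mpoly C[3]}).@[mk3 (p c0) (p c1) z].
  rewrite rmorph1 => _.
  have [sT lT] := size_lead_linear_prod (p c0) (p c1) (tU 0 0 z) (oner_neq0 C) (oner_neq0 C).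
  by rewrite sT lT mulr1.
have Fp : (Ueq 'X_c0 'X_c1 'X_c2).@[mk3 (p c0) (p c1) (p c2)] = 0 by rewrite meval_Ueq.
have [||w [Uw Dw near_w]] := approx_chebeq_along_line _ PF sizeT Fp D0 _ d0.
- by rewrite normr1.
- by rewrite rmorph1 oner_neq0.
exists w; split=> //; first by move: Uw; rewrite meval_Ueq.
by move: near_w; rewrite mk3E.
Qed.

Lemma Vset_approx p : Vset m n p -> (detm 'X_c2).@[p] = 0 -> forall d, 0 < d ->
  exists w, [/\ Vset m n w, (detm 'X_c2).@[w] != 0 & forall i, `|w i - p i| < d].
Proof.
rewrite meval_detm => Vp D0 d d0.
pose T z := ((cheb m z)%:P * 'X + (uV (p c0) (p c1) z)%:P) *
            ((- cheb (m - 1) z)%:P * 'X + (vV (p c0) (p c1) z)%:P) + (tU 0 0 z)%:P.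
pose lam : {mpoly C[3]} := cheb m 'X_c2 * - cheb (m - 1) 'X_c2.
have lamE z : lam.@[mk3 (p c0) (p c1) z] = cheb m z * - cheb (m - 1) z.
  by rewrite rmorphM rmorphN /= !meval_cheb.
have PF z s : (chebeq (T z) (cheb (m - 1) z)%:P (cheb m z)%:P).[s] =
              (Veq 'X_c0 'X_c1 'X_c2).@[mk3 (s + p c0) (0 * s + p c1) z].
  rewrite meval_Veq /= mul0r add0r /T -uV_line -vV_line -Ueq_polyC -/(Veq _ _ _).
  by rewrite -horner_evalE rmorph_Veq /= !horner_evalE !(hornerD, hornerX, hornerC).
have sizeT z : lam.@[mk3 (p c0) (p c1) z] != 0 ->
    size (T z) = 3 /\ lead_coef (T z) = lam.@[mk3 (p c0) (p c1) z].
  rewrite lamE mulf_eq0 negb_or => /andP [a0 b0].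
  exact: size_lead_linear_prod.
have Fp : (Veq 'X_c0 'X_c1 'X_c2).@[mk3 (p c0) (p c1) (p c2)] = 0 by rewrite meval_Veq.
have lam0 : lam.@[mk3 (p c0) (p c1) (p c2)] != 0.
  by have [b0 a0] := detm_eq0_cheb_neq0 D0; rewrite lamE mulf_neq0 ?oppr_eq0.
have [|w [Vw Dw near_w]] := approx_chebeq_along_line _ PF sizeT Fp D0 lam0 d0.
  by rewrite normr0.
exists w; split=> //; first by move: Vw; rewrite meval_Veq.
by move: near_w; rewrite mk3E.
Qed.

Definition to_uvz (p : pt C) : pt C :=
  mk3 (uV (p c0) (p c1) (p c2)) (vV (p c0) (p c1) (p c2)) (p c2).

Definition to_xyz (p : pt C) : pt C :=
  mk3 ((p c0 * cheb m (p c2) + p c1 * cheb (m - 1) (p c2)) / detm (p c2))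
      ((p c1 * cheb m (p c2) + p c0 * cheb (m - 1) (p c2)) / detm (p c2)) (p c2).

Lemma Vset_to_uvz p : Vset m n p = Uset m n (to_uvz p).
Proof. by []. Qed.

Lemma to_uvzK p : detm (p c2) != 0 -> to_xyz (to_uvz p) = p.
Proof.
rewrite -[RHS]mk3E /to_xyz /to_uvz /= /uV /vV /detm => D0.
by congr mk3; rewrite !(mk3_c0, mk3_c1, mk3_c2); field.
Qed.

Lemma to_xyzK p : detm (p c2) != 0 -> to_uvz (to_xyz p) = p.
Proof.
rewrite -[RHS]mk3E /to_xyz /to_uvz /= /uV /vV /detm => D0.
by congr mk3; rewrite !(mk3_c0, mk3_c1, mk3_c2); field.
Qed.

Lemma regular_on_to_uvz W : regular_on W to_uvz.
Proof.
pose P := mk3 (uV 'X_c0 'X_c1 'X_c2) (vV 'X_c0 'X_c1 'X_c2) ('X_c2 : {mpoly C[3]}).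
apply: (@regular_on_frac _ _ _ P 1) => [w _|w + _]; first by rewrite meval1 oner_neq0.
apply: ord3_cases; rewrite meval1 divr1 /P /to_uvz !(mk3_c0, mk3_c1, mk3_c2).
all: by rewrite ?meval_uV ?meval_vV ?mevalXU.
Qed.

Lemma regular_on_to_xyz W : (forall w, W w -> detm (w c2) != 0) -> regular_on W to_xyz.
Proof.
pose P := mk3 ('X_c0 * cheb m 'X_c2 + 'X_c1 * cheb (m - 1) 'X_c2)
  ('X_c1 * cheb m 'X_c2 + 'X_c0 * cheb (m - 1) 'X_c2) ('X_c2 * detm 'X_c2 : {mpoly C[3]}).
move=> WD; apply: (@regular_on_frac _ _ _ P (detm 'X_c2)) => [w Ww|w + Ww].
  by rewrite meval_detm WD.
apply: ord3_cases; rewrite /P /to_xyz !(mk3_c0, mk3_c1, mk3_c2) meval_detm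
  ?rmorphD !rmorphM /= ?meval_cheb ?meval_detm !mevalXU //.
by rewrite mulfK // WD.
Qed.

Theorem birational_Vset_Uset : birational (Vset (C := C) m n) (Uset (C := C) m n).
Proof.
pose D : {mpoly C[3]} := detm 'X_c2.
have D_uvz p : D.@[to_uvz p] = D.@[p] by rewrite !meval_detm.
have D_xyz p : D.@[to_xyz p] = D.@[p] by rewrite !meval_detm.
exists (fun p => Vset m n p /\ D.@[p] != 0), (fun w => Uset m n w /\ D.@[w] != 0).
exists to_uvz, to_xyz; split; [exact: open_in_nonvanishing|split].
  exact: dense_in_nonvanishing Vset_approx.
split; [exact: open_in_nonvanishing|split].
  exact: dense_in_nonvanishing Uset_approx.
split; first exact: regular_on_to_uvz.
split; first by apply: regular_on_to_xyz => w [_]; rewrite meval_detm.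
split; first by move=> p [Vp Dp]; rewrite D_uvz -Vset_to_uvz.
split; first by move=> w [Uw Dw]; rewrite D_xyz Vset_to_uvz to_xyzK // -meval_detm.
by split=> p [_]; rewrite meval_detm; [exact: to_uvzK | exact: to_xyzK].
Qed.

End ClosedField.
End Surfaces.

Theorem proposition4p4 (R : realType) (k l m n : int)
  (hk : k = 2 * m + 1) (hl : l = 2 * n + 1) :
  birational (Vset (C := R[i]) m n) (Uset (C := R[i]) m n).
Proof. exact: birational_Vset_Uset. Qed.
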